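(* Let $X$ and $Y$ be spaces with $X$ compact Hausdorff, let $a\colon X\to Y$ be a map, and let $E$ be a nonempty finite set. Then every affine ensemble $Q\in\langle (Y^X,a)^{\check C\Delta E}\rangle$ is $(X,1)$-almost fissile.
   Context: Spaces and maps are based unless called unbased. $\langle W\rangle$ = free abelian group on a set $W$; augmentation $\epsilon\colon\langle W\rangle\to\mathbb Z$, $\langle w\rangle\mapsto1$; an ensemble is affine if $\epsilon=1$. $Y^X$ = space of based maps $X\to Y$ (compact-open); $(Y^X,a)$ is this space with basepoint $a$. $V\mapsto V|_R$ restriction homomorphisms; $\mathcal F_n(Z)$ = finite subsets of $Z$ containing the basepoint with at most $n+1$ elements; for based $Z$, $\langle Y^Z\rangle^{(s)}=\{V:V|_R=0\ \forall R\in\mathcal F_{s-1}(Z)\}$. For unbased $U$, $(Y^X)^{(U)}$ = unbased maps $U\to Y^X$; $U\wr X=(U\times X)/(U\times\{x_0\})$; $\#^X(w)(u\wr x)=w(u)(x)$ is a bijection $(Y^X)^{(U)}\to Y^{U\wr X}$, and $\langle (Y^X)^{(U)}\rangle^{(s)}_X=\langle\#^X\rangle^{-1}\langle Y^{U\wr X}\rangle^{(s)}$. For a based space $T$, $\langle (Y^X,a)^T\rangle$ (based maps $T\to(Y^X,a)$) is regarded inside $\langle (Y^X)^{(T)}\rangle$. For nonempty finite $E$: simplex $\Delta E$, faces $\Delta F$; a layout is a set $A$ of pairwise disjoint nonempty subsets of $E$. Cone $\check CU=(U\times[0,1])/(U\times\{0\})$ based at the apex; $\check C\Delta F\subseteq\check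 C\Delta E$ and $\check C\Delta[A]=\bigvee_{F\in A}\check C\Delta F$. Combining product $\boxed{\vee}\colon\prod_{F\in A}\langle Z^{\check C\Delta F}\rangle\to\langle Z^{\check C\Delta[A]}\rangle$ multilinear with $\boxed{\vee}_F\langle v_F\rangle=\langle\bar\bigvee_Fv_F\rangle$. $Q\in\langle (Y^X,a)^{\check C\Delta E}\rangle$ is $(X,r)$-almost fissile if, for every layout $A$, $\boxed{\vee}_{F\in A}Q|_{\check C\Delta F}-Q|_{\check C\Delta[A]}\in\langle (Y^X)^{(\check C\Delta[A])}\rangle^{(r+1)}_X$. *)

From HB Require Import structures.
From mathcomp Require Import all_boot all_order all_algebra generic_quotient.
From mathcomp Require Import finmap all_classical all_reals topology.
Import numFieldTopology.Exports.

Set Implicit Arguments.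
Unset Strict Implicit.
Unset Printing Implicit Defensive.

Import Order.TTheory GRing.Theory Num.Theory.
Local Open Scope classical_set_scope.
Local Open Scope ring_scope.
Local Open Scope quotient_scope.

(* Free abelian groups  <W>  on a set  W : set T, as finitely supported
   Z-valued functions on T with support in W.  [V t] is the coefficient of
   the generator <t>.                                                         *)
Definition fsupp {T : Type} (V : T -> int) : set T := [set t | V t != 0].

Definition free_ab {T : choiceType} (W : set T) : set (T -> int) :=
  [set V | finite_set (fsupp V) /\ fsupp V `<=` W].

Definition augmentation {T : choiceType} (V : T -> int) : int :=
  \sum_(t \in [set: T]) V t.

Definition lin_ext {T U : choiceType} (phi : T -> U) (V : T -> int) : U -> int :=
  fun u => \sum_(t \in phi @^-1` [set u]) V t.

(* A map defined on a subspace S of T with values in Z is encoded as a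
   function T -> Z which takes the fixed junk value z outside S;
   [restr z S f] is the restriction of f to S in this encoding.             *)
Definition restr {T Z : Type} (z : Z) (S : set T) (f : T -> Z) : T -> Z :=
  fun t => if `[< S t >] then f t else z.

Section mapping_spaces.
Variables (X Y : topologicalType) (x0 : X) (y0 : Y).

(* Y^X : based (continuous) maps X -> Y; topologised by the compact-open
   topology {compact-open, X -> Y}. *)
Definition based_maps : set (X -> Y) := [set f | continuous f /\ f x0 = y0].

Definition junk_map : X -> Y := fun _ => y0.

(* (Y^X)^{(S)} for a subspace S of a space T : unbased continuous maps
   S -> Y^X (encoded with junk value [junk_map] outside S). *)
Definition unbased_maps_into {T : topologicalType} (S : set T) : set (T -> X -> Y) :=
  [set g | (forall t, S t -> based_maps (g t))
        /\ {within S, continuous (g : T -> {compact-open, X -> Y})}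
        /\ (forall t, ~ S t -> g t = junk_map)].

Definition based_maps_into {T : topologicalType} (S : set T) (t0 : T) (a : X -> Y) :
    set (T -> X -> Y) :=
  [set g | unbased_maps_into S g /\ g t0 = a].

End mapping_spaces.

Section filtration.
Variables (Z Y : topologicalType) (z0 : Z) (y0 : Y).

Definition Fsets (n : nat) : set (set Z) :=
  [set Rs | finite_set Rs /\ Rs z0 /\ (#|` fset_set Rs|%fset <= n.+1)%N].

(* <Y^Z>^{(s)} = { V in <Y^Z> : V|_Rs = 0 for all Rs in F_{s-1}(Z) };
   V|_Rs is the image of V under the restriction <Y^Z> -> <Y^Rs>. *)
Definition filtration (s : nat) : set ((Z -> Y) -> int) :=
  [set V | free_ab (based_maps z0 y0) V /\
     forall Rs, Fsets s.-1 Rs -> forall g, lin_ext (restr y0 Rs) V g = 0].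
End filtration.

(* The half-smash  U wr X = (U x X)/(U x {x0})  of an (unbased) subspace U
   of a space T with a based space (X, x0), and  #^X.                        *)
Section wreath.
Variables (T X Y : topologicalType) (U : set T) (x0 : X).

Definition wr_pre := (set_type U * X)%type.

Definition wr_rel' (p q : wr_pre) : bool :=
  (p == q) || ((p.2 == x0) && (q.2 == x0)).

Lemma wr_rel_refl : reflexive wr_rel'.
Proof. by move=> ?; rewrite /wr_rel' eqxx. Qed.

Lemma wr_rel_sym : symmetric wr_rel'.
Proof. by move=> p q; rewrite /wr_rel' eq_sym andbC. Qed.

Lemma wr_rel_trans : transitive wr_rel'.
Proof.
move=> q p r; rewrite /wr_rel' => /orP[/eqP -> //|/andP[px qx]].
by case/orP=> [/eqP <-|/andP[_ rx]]; rewrite px ?qx ?rx orbT.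
Qed.

Definition wr_rel := EquivRel wr_rel' wr_rel_refl wr_rel_sym wr_rel_trans.

Definition wreath := {eq_quot wr_rel}.
HB.instance Definition _ := Quotient.on wreath.
HB.instance Definition _ := Topological.copy wreath (quotient_topology wreath).

Definition wr_base (u : set_type U) : wreath := \pi_wreath (u, x0).

Definition hashX (w : T -> X -> Y) : wreath -> Y :=
  fun q => w (\val (repr q).1) (repr q).2.

End wreath.

Section cone.
Variables (R : realType) (E : finType).

Definition simplexE : set (E -> R) :=
  [set t | (forall e, 0 <= t e) /\ \sum_(e : E) t e = 1].

Definition cone_base : set ({ptws E -> R} * R)%type :=
  [set p | simplexE p.1 /\ 0 <= p.2 <= 1].

Local Notation cone_pre := (set_type cone_base).

Definition cone_rel' (p q : cone_pre) : bool :=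
  (p == q) || (((\val p).2 == 0) && ((\val q).2 == 0)).

Lemma cone_rel_refl : reflexive cone_rel'.
Proof. by move=> ?; rewrite /cone_rel' eqxx. Qed.

Lemma cone_rel_sym : symmetric cone_rel'.
Proof. by move=> p q; rewrite /cone_rel' eq_sym andbC. Qed.

Lemma cone_rel_trans : transitive cone_rel'.
Proof.
move=> q p r; rewrite /cone_rel' => /orP[/eqP -> //|/andP[px qx]].
by case/orP=> [/eqP <-|/andP[_ rx]]; rewrite px ?qx ?rx orbT.
Qed.

Definition cone_rel := EquivRel cone_rel' cone_rel_refl cone_rel_sym cone_rel_trans.

Definition cone := {eq_quot cone_rel}.
HB.instance Definition _ := Quotient.on cone.
HB.instance Definition _ := Topological.copy cone (quotient_topology cone).

Definition cface (F : {set E}) : set cone :=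
  [set c | exists p : cone_pre, \pi_cone p = c /\
                                forall e, e \notin F -> (\val p).1 e = 0].

Variable e0 : E. (* witness that E is nonempty *)

Definition vertex : E -> R := fun e => if e == e0 then 1 else 0.

Lemma apex_pre_in : ((vertex : {ptws E -> R}), (0 : R)) \in cone_base.
Proof.
apply/mem_set; split; last by rewrite /= lexx ler01.
split=> [e|] /=.
  by rewrite /vertex; case: (e == e0); rewrite ?ler01 ?lexx.
rewrite /vertex (bigD1 e0) //= eqxx big1 ?addr0 // => e /negbTE -> //.
Qed.

Definition apex : cone := \pi_cone (SigSub apex_pre_in : cone_pre).

Definition layout (A : {set {set E}}) : Prop :=
  (forall F, F \in A -> F != finset.set0) /\
  (forall F G, F \in A -> G \in A -> F != G -> (F :&: G == finset.set0)).

(* CDelta[A] = \/_{F in A} CDelta F, a subspace of CDelta E (containing the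
   apex, which is the whole wedge when A is empty) *)
Definition cwedge (A : {set {set E}}) : set cone :=
  [set c | c = apex \/ exists2 F, F \in A & cface F c].

Lemma apex_in_cwedge (A : {set {set E}}) : apex \in cwedge A.
Proof. by apply/mem_set; left. Qed.

Definition apexA (A : {set {set E}}) : set_type (cwedge A) :=
  SigSub (apex_in_cwedge A).

Variables (X Y : topologicalType) (x0 : X) (y0 : Y) (a : X -> Y).

Local Notation jk := (fun _ : X => y0).

Definition restrict_ens (S : set cone) (Q : (cone -> X -> Y) -> int) :
    (cone -> X -> Y) -> int :=
  lin_ext (restr jk S) Q.

Definition wedge_map (A : {set {set E}}) (w : {set E} -> cone -> X -> Y) :
    cone -> X -> Y :=
  fun c => if c == apex then a else
    match [pick F in A | `[< cface F c >]] with
    | Some F => w F c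
    | None => jk
    end.

(* combining product: the multilinear map with
   [boxed \/]_F <v_F> = <\bar\/_F v_F> *)
Definition combine (A : {set {set E}})
    (V : {set E} -> (cone -> X -> Y) -> int) : (cone -> X -> Y) -> int :=
  fun v => \sum_(w \in [set w : {set E} -> cone -> X -> Y |
                         (forall F, F \notin A -> w F = (fun _ => jk)) /\
                         wedge_map A w = v])
             \prod_(F in A) V F (w F).

Definition almost_fissile (r : nat) (Q : (cone -> X -> Y) -> int) : Prop :=
  forall A : {set {set E}}, layout A ->
    let D := fun v => combine A (fun F => restrict_ens (cface F) Q) v
                      - restrict_ens (cwedge A) Q v in
    free_ab (unbased_maps_into x0 y0 (cwedge A)) D /\
    filtration (wr_base x0 (apexA A)) y0 r.+1 (lin_ext (@hashX _ X Y (cwedge A) x0) D).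

End cone.

(* Write Q = sum_k c_k <q_k> with sum_k c_k = 1.  For a layout A the combining
   product of the face restrictions of Q is the formal sum, over all f : A -> K,
   of the weight prod_F c_(f F) times the wedge of the restrictions of the
   q_(f F) to the faces.  An ensemble of based maps on the half-smash lies in
   filtration degree 2 once its push-forward along every evaluation map
   vanishes, and evaluation at u wr x factors through evaluation at u in
   CDelta[A].  Evaluated at u, the defect [\/]_F Q|CDelta F - Q|CDelta[A]
   vanishes: at the apex every map takes the value a and both terms have total
   weight 1, while at a point of a face CDelta F summing the product weights
   over the other faces leaves c_(f F), so both terms push forward to
   sum_k c_k <q_k(u)>.  Compactness and Hausdorffness of X only serve to make
   #^X of a continuous map on CDelta[A] continuous on the half-smash. *)

From HB Require Import structures.
From mathcomp Require Import all_boot all_order all_algebra generic_quotient.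
From mathcomp Require Import finmap all_classical all_reals topology.
Import numFieldTopology.Exports.

Set Implicit Arguments.
Unset Strict Implicit.
Unset Printing Implicit Defensive.

Import GRing.Theory.
Local Open Scope classical_set_scope.
Local Open Scope ring_scope.
Local Open Scope quotient_scope.

Lemma fsbig_uniq_seq (T : choiceType) (A : set T) (r : seq T) (f : T -> int) :
  uniq r -> (forall t, A t -> t \notin r -> f t = 0) ->
  \sum_(t \in A) f t = \sum_(t <- r | t \in A) f t.
Proof.
move=> ur f0; rewrite (bigfs _ _ (P := fun t => t \in A)) ?set_mem_set //.
by move=> t; rewrite inE => /f0.
Qed.

Section LinearCombinations.
Variable K : finType.
Implicit Types (T U : choiceType) (c : K -> int).

Definition lincomb T c (g : K -> T) : T -> int := fun t => \sum_(k | g k == t) c k.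

Lemma fsupp_lincomb T c (g : K -> T) : fsupp (lincomb c g) `<=` range g.
Proof.
move=> t; rewrite /fsupp /= /lincomb; apply: contraNP => ngt.
by rewrite big_pred0 // => k; apply/eqP => gkt; apply: ngt; exists k.
Qed.

Lemma free_ab_lincomb T (W : set T) c (g : K -> T) :
  (forall k, W (g k)) -> free_ab W (lincomb c g).
Proof.
move=> Wg; split=> [|t /fsupp_lincomb [k _ <-] //].
apply: (sub_finite_set (@fsupp_lincomb _ c g)).
exact/finite_image/finite_finset.
Qed.

Lemma fsbig_lincomb T (A : set T) c (g : K -> T) :
  \sum_(t \in A) lincomb c g t = \sum_(k | g k \in A) c k.
Proof.
set r := undup (map g (enum K)).
have gr k : g k \in r by rewrite mem_undup map_f ?mem_enum.
have ur : uniq r := undup_uniq _.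
rewrite (fsbig_uniq_seq ur); last first.
  move=> t _ tr; apply/eqP; apply: contraNT tr => /fsupp_lincomb [k _ <-].
  exact: gr.
rewrite /lincomb (exchange_big_dep (fun k => g k \in A)) /=; last first.
  by move=> t k tA /eqP ->.
apply: eq_bigr => k gkA; rewrite (eq_bigl (pred1 (g k))); last first.
  by move=> t /=; rewrite eq_sym andb_idl // => /eqP ->.
by rewrite -big_filter filter_pred1_uniq // big_seq1.
Qed.

Lemma lin_ext_lincomb T U (phi : T -> U) c (g : K -> T) :
  lin_ext phi (lincomb c g) = lincomb c (phi \o g).
Proof.
apply/funext => u; rewrite /lin_ext fsbig_lincomb.
by apply: eq_bigl => k; apply/idP/eqP => [/set_mem|/mem_set].
Qed.

Lemma augmentation_lincomb T c (g : K -> T) : augmentation (lincomb c g) = \sum_k c k.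
Proof. by rewrite /augmentation fsbig_lincomb; apply: eq_bigl => k; apply/mem_set. Qed.

Lemma lincomb_comp_eq0 T U (phi : T -> U) c (g : K -> T) :
  lincomb c g = (fun=> 0) -> lincomb c (phi \o g) = (fun=> 0).
Proof.
by move=> cg0; rewrite -lin_ext_lincomb cg0; apply/funext => u; exact: fsbig1.
Qed.

Lemma lincomb_cst T c (t0 : T) :
  lincomb c (fun=> t0) = fun t => if t0 == t then \sum_k c k else 0.
Proof.
by apply/funext => t; rewrite /lincomb; case: eqP => // _; rewrite big_pred0.
Qed.

End LinearCombinations.

Lemma lincombB (K1 K2 : finType) (T : choiceType) (c1 : K1 -> int) (g1 : K1 -> T)
    (c2 : K2 -> int) (g2 : K2 -> T) :
  lincomb c1 g1 \- lincomb c2 g2 =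
  lincomb (fun k => match k with inl k1 => c1 k1 | inr k2 => - c2 k2 end)
          (fun k => match k with inl k1 => g1 k1 | inr k2 => g2 k2 end).
Proof. by apply/funext => t; rewrite /lincomb big_sumType sumrN. Qed.

Lemma free_ab_lincomb_repr (T : choiceType) (W : set T) (V : T -> int) :
  free_ab W V ->
  exists (K : finType) (c : K -> int) (g : K -> T),
    (forall k, W (g k)) /\ V = lincomb c g.
Proof.
move=> [Vfin VW]; pose S := fset_set (fsupp V).
exists S, (fun k => V (val k)), val; split=> [k|].
  by apply: VW; have := valP k; rewrite in_fset_set // => /set_mem.
apply/funext => t; rewrite /lincomb -(big_seq_fsetE _ S (fun i => i == t) V).
have [tS|tS] := boolP (t \in S).
  by rewrite -big_filter filter_pred1_uniq ?fset_uniq // big_seq1.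
rewrite big_seq_cond big_pred0 => [|i]; last first.
  by apply/andP => -[iS /eqP it]; rewrite -it iS in tS.
apply/eqP; apply: contraNT tS => Vt; rewrite in_fset_set //; exact/mem_set.
Qed.

Lemma prod_if_forall (R : comPzSemiRingType) (I : finType) (P : pred I) (b : pred I)
    (F : I -> R) :
  \prod_(i | P i) (if b i then F i else 0) =
  if [forall i, P i ==> b i] then \prod_(i | P i) F i else 0.
Proof.
case: ifPn => [/forallP Pb|/forallPn[i]].
  by apply: eq_bigr => i /(implyP (Pb i)) ->.
by rewrite negb_imply => /andP[Pi /negbTE bi]; rewrite (bigD1 i) //= bi mul0r.
Qed.

Section ProductCoefficients.
Variables (I J : finType) (j0 : J) (A : {set I}) (c : J -> int).
Hypothesis c1 : \sum_j c j = 1.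

(* The product weight on the functions A -> J, encoded as functions I -> J that
   take the dummy value j0 off A; all other functions get weight 0. *)
Definition prod_coef (f : {ffun I -> J}) : int :=
  if f \in pfamily j0 A (fun _ _ => true) then \prod_(i in A) c (f i) else 0.

Lemma sum_prod_coef : \sum_f prod_coef f = 1.
Proof.
rewrite /prod_coef -big_mkcond /=.
rewrite -(big_distr_big_dep j0 (mem A) (fun _ _ => true) (fun _ j => c j)) /=.
by rewrite big1 // => i _; rewrite c1.
Qed.

Lemma sum_prod_coef_mul i0 (h : J -> int) :
  i0 \in A -> \sum_f prod_coef f * h (f i0) = \sum_j c j * h j.
Proof.
move=> Ai0; pose G i j := if i == i0 then c j * h j else c j.
have Gi0 j : G i0 j = c j * h j by rewrite /G eqxx.
have cG i j : i != i0 -> G i j = c j by rewrite /G => /negbTE ->.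
transitivity (\sum_(f in pfamily j0 A (fun _ _ => true)) \prod_(i in A) G i (f i)).
  rewrite [RHS]big_mkcond; apply: eq_bigr => f _.
  rewrite /prod_coef; case: ifP => _; last by rewrite mul0r.
  rewrite (bigD1 i0) // [RHS](bigD1 i0) //= Gi0 mulrAC; congr (_ * _ * _).
  by apply: eq_bigr => i /andP[_ /cG].
rewrite -(big_distr_big_dep j0 (mem A) (fun _ _ => true) G) /= (bigD1 i0) //=.
rewrite (eq_bigr _ (fun j _ => Gi0 j)) [X in _ * X]big1 ?mulr1 // => i /andP[_ ni0].
by rewrite (eq_bigr _ (fun j _ => cG i j ni0)).
Qed.

Lemma lincomb_prod_coef_eval (T : choiceType) i0 (g : J -> T) :
  i0 \in A -> lincomb prod_coef (fun f => g (f i0)) = lincomb c g.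
Proof.
move=> Ai0; apply/funext => t; rewrite /lincomb big_mkcond [RHS]big_mkcond /=.
rewrite (eq_bigr (fun f => prod_coef f * (g (f i0) == t)%:R)); last first.
  by move=> f _; rewrite mulr_natr mulrb.
rewrite (sum_prod_coef_mul (fun j => (g j == t)%:R) Ai0).
by apply: eq_bigr => j _; rewrite mulr_natr mulrb.
Qed.
End ProductCoefficients.

Lemma prod_lincomb (I K : finType) (k0 : K) (A : {set I}) (T : choiceType)
    (c : K -> int) (g : I -> K -> T) (d w : I -> T) :
  (forall i, i \notin A -> w i = d i) ->
  \prod_(i in A) lincomb c (g i) (w i) =
  lincomb (prod_coef k0 A c) (fun f i => if i \in A then g i (f i) else d i) w.
Proof.
move=> wd; rewrite /lincomb /prod_coef.
under eq_bigr do rewrite big_mkcond.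
rewrite (big_distr_big_dep k0) /= [LHS]big_mkcond [RHS]big_mkcond.
apply: eq_bigr => f _; case: ifP => _; last by rewrite if_same.
rewrite prod_if_forall; congr (if _ then _ else _).
apply/forallP/eqP => [gw|<- i]; last by apply/implyP => ->.
by apply/funext => i; case: ifPn => [iA|/wd ->//]; apply/eqP; exact: implyP (gw i) iA.
Qed.

Lemma fset_set_card_le2 (T : choiceType) (S : set T) z :
  finite_set S -> S z -> (#|` fset_set S| <= 2)%N ->
  exists p, forall q, S q -> q = z \/ q = p.
Proof.
move=> Sfin Sz Scard.
have [[p [Sp /eqP pz]]|] := pselect (exists p, S p /\ p <> z); last first.
  move=> /forallNP noS; exists z => q Sq; left.
  by apply: contrapT => qz; apply: (noS q).
exists p => q Sq; have [|/eqP qz] := pselect (q = z); [by left|right].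
apply: contrapT => /eqP qp; move: Scard; apply/negP; rewrite -ltnNge.
have /uniq_leq_size : {subset [:: z; p; q] <= fset_set S}.
  by move=> t; rewrite !inE in_fset_set // => /or3P[] /eqP ->; exact/mem_set.
by apply; rewrite /= !inE !negb_or eq_sym pz eq_sym qz eq_sym qp.
Qed.

Lemma filtration2_lincomb (Z Y : topologicalType) (z0 : Z) (y0 : Y) (K : finType)
    (c : K -> int) (g : K -> Z -> Y) :
  (forall k, based_maps z0 y0 (g k)) ->
  (forall z, lincomb c (fun k => g k z) = (fun=> 0)) ->
  filtration z0 y0 2 (lincomb c g).
Proof.
move=> gb gz0; split=> [|Rs [Rsfin [Rsz0 Rscard]] v]; first exact: free_ab_lincomb.
have [p Rszp] := fset_set_card_le2 Rsfin Rsz0 Rscard.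
(* On Rs, which is contained in {z0, p}, a based map only depends on its value at p. *)
pose at_p (y : Y) := restr y0 Rs (fun z => if z == p then y else y0).
rewrite lin_ext_lincomb (_ : restr y0 Rs \o g = at_p \o (fun k => g k p)).
  by rewrite (lincomb_comp_eq0 at_p (gz0 p)).
apply/funext => k; apply/funext => z; rewrite /= /at_p /restr.
case: asboolP => // /Rszp[->|->]; last by rewrite eqxx.
by case: eqP => [->//|_]; exact: (gb k).2.
Qed.

Lemma repr_wr_base (T X : topologicalType) (U : set T) (x0 : X) (u : set_type U) :
  (repr (wr_base x0 u)).2 = x0.
Proof.
by case/eqmodP/orP: (reprK (wr_base x0 u)) => [/eqP ->|/andP[/eqP -> _]].
Qed.

Lemma hashX_based (T X Y : topologicalType) (U : set T) (x0 : X) (y0 : Y)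
    (u : set_type U) (g : T -> X -> Y) :
  compact [set: X] -> hausdorff_space X ->
  unbased_maps_into x0 y0 U g -> based_maps (wr_base x0 u) y0 (hashX g).
Proof.
move=> cX hX [gb [gc _]]; split; last first.
  by rewrite /hashX repr_wr_base; exact: (gb _ (set_valP _)).2.
have lcX : locally_compact [set: X].
  move=> x _; exists [set: X]; last by split => //; exact: closedT.
  by rewrite withinET; exact: filterT.
pose f (v : set_type U) : {compact-open, X -> Y} := g (set_val v).
have fc : continuous f by have := (subspace_sigL_continuousP _ _).1 gc.
have -> : hashX g = uncurry f \o repr :> (wreath U x0 -> Y).
  by apply/funext => q; rewrite /hashX /=; case: (repr q) => v x.
apply: repr_comp_continuous.
  by apply: continuous_uncurry => // v; exact: (gb _ (set_valP v)).1.
move=> [v x] [w z] /eqP /eqmodP /orP[/eqP [-> ->] //|/andP[/eqP /= -> /eqP /= ->]].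
by rewrite /f (gb _ (set_valP v)).2 (gb _ (set_valP w)).2.
Qed.

Section ConeGeometry.
Variables (R : realType) (E : finType) (e0 : E).
Local Notation cone_pre := (set_type (@cone_base R E)).
Local Notation pi_cone := (\pi_(cone R E) : cone_pre -> cone R E).
Local Notation apex := (apex R e0).

Lemma pi_cone_eq (p q : cone_pre) : pi_cone p = pi_cone q ->
  p = q \/ (\val p).2 = 0 /\ (\val q).2 = 0.
Proof. by move/eqmodP/orP => [/eqP|/andP[/eqP p0 /eqP q0]]; [left|right]. Qed.

Lemma pi_cone_apex (p : cone_pre) : pi_cone p = apex <-> (\val p).2 = 0.
Proof.
split=> [/pi_cone_eq[->|[]] //|p0].
by apply/eqmodP; rewrite /= /cone_rel' p0 eqxx orbT.
Qed.

Lemma cface_disjoint (F G : {set E}) (c : cone R E) : F :&: G = finset.set0 ->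
  cface F c -> cface G c -> c = apex.
Proof.
move=> FG0 [p [<- pF]] [q [/esym/pi_cone_eq[<-{q} pG|[/pi_cone_apex //]]]].
have [[_]] := set_valP p; rewrite big1 => [/eqP|e _]; first by rewrite eq_sym oner_eq0.
have [eF|/pF //] := boolP (e \in F); apply: pG; apply/negP => eG.
by have := finset.in_setI e F G; rewrite eF eG FG0 finset.in_set0.
Qed.

Lemma closed_cone (S : set (cone R E)) : closed (pi_cone @^-1` S) -> closed S.
Proof.
move=> cS; rewrite -[S]setCK; apply: open_closedC.
by rewrite /open /= /quotient_open preimage_setC; exact: closed_openC.
Qed.

Let continuous_cone_val : continuous (set_val : cone_pre -> {ptws E -> R} * R).
Proof. exact: initial_continuous. Qed.

Lemma continuous_cone_coord (e : E) : continuous (fun p : cone_pre => (set_val p).1 e).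
Proof.
move=> p; apply: (@continuous_comp _ _ _ _ (fun x : {ptws E -> R} * R => x.1 e) _
  (@continuous_cone_val p)).
exact: (@continuous_comp _ _ _ fst (fun t : {ptws E -> R} => t e) _ cvg_fst
  (@proj_continuous _ _ e _)).
Qed.

Lemma continuous_cone_height : continuous (fun p : cone_pre => (set_val p).2).
Proof.
move=> p; apply: (@continuous_comp _ _ _ _ snd _ (@continuous_cone_val p)).
exact: cvg_snd.
Qed.

Let closed_zero : closed [set 0 : R].
Proof. exact/accessible_closed_set1/hausdorff_accessible/Rhausdorff. Qed.

Lemma closed_cone_height0 : closed [set p : cone_pre | (\val p).2 = 0].
Proof.
exact: (continuous_closedP _).1 continuous_cone_height _ closed_zero.
Qed.

Lemma closed_apex : closed [set apex].
Proof.
apply: closed_cone; rewrite (_ : _ @^-1` _ = [set p : cone_pre | (\val p).2 = 0]).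
  exact: closed_cone_height0.
by apply/seteqP; split => p /pi_cone_apex.
Qed.

Lemma closed_cface (F : {set E}) : closed (@cface R E F).
Proof.
apply: closed_cone.
(* The second part is empty unless the apex lies in CDelta F, i.e. F is nonempty. *)
rewrite (_ : _ @^-1` _ = \bigcap_(e in [set e | e \notin F])
    [set p : cone_pre | (set_val p).1 e = 0]
  `|` [set p | (\val p).2 = 0 /\ cface F apex]).
  apply: closedU.
    apply: closed_bigI => e _.
    exact: (continuous_closedP _).1 (@continuous_cone_coord e) _ closed_zero.
  have [Fa|nFa] := pselect (cface F apex); last first.
    rewrite (_ : [set p : cone_pre | _] = set0); first exact: closed0.
    by apply/seteqP; split=> p [].
  rewrite (_ : [set p : cone_pre | _] = [set p | (\val p).2 = 0]).
    exact: closed_cone_height0.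
  by apply/seteqP; split=> [p []|p].
apply/seteqP; split=> p /=.
  move=> [q [/pi_cone_eq[<-|[q0 p0]] qF]]; first by left.
  by right; split=> //; exists q; split=> //; apply/pi_cone_apex.
case=> [pF|[p0 [q [qa qF]]]]; first by exists p.
by exists q; split=> //; rewrite qa; apply/esym/pi_cone_apex.
Qed.

End ConeGeometry.

Lemma based_maps_cst (X Y : topologicalType) (x0 : X) (y0 : Y) :
  based_maps x0 y0 (fun=> y0).
Proof. by split=> //; exact: cst_continuous. Qed.

Lemma within_bigsetU_continuous (T U : topologicalType) (I : eqType) (s : seq I)
    (S : I -> set T) (f : T -> U) :
  (forall i, i \in s -> closed (S i)) ->
  (forall i, i \in s -> {within S i, continuous f}) ->
  {within \big[setU/set0]_(i <- s) S i, continuous f}.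
Proof.
elim: s => [|i s IH] Sc fc; first by rewrite big_nil; exact: continuous_subspace0.
have sub j : j \in s -> j \in i :: s by rewrite in_cons => ->; rewrite orbT.
rewrite big_cons; apply: withinU_continuous; first exact/Sc/mem_head.
- by apply: closed_bigsetU => j /sub; exact: Sc.
- exact/fc/mem_head.
- by apply: IH => j /sub; [exact: Sc|exact: fc].
Qed.

Section Wedge.
Variables (R : realType) (E : finType) (e0 : E) (X Y : topologicalType).
Variables (x0 : X) (y0 : Y) (a : X -> Y).
Local Notation cone := (cone R E).
Local Notation apex := (apex R e0).
Local Notation M := (cone -> X -> Y).
Local Notation based_cone_map q := (based_maps_into x0 y0 [set: cone] apex a q).

Definition face_restr (A : {set {set E}}) (qs : {set E} -> M) : {set E} -> M :=
  fun F => if F \in A then restr (fun=> y0) (cface F) (qs F) else fun _ _ => y0.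

Lemma continuous_based_cone_map (q : M) :
  based_cone_map q -> continuous (q : cone -> {compact-open, X -> Y}).
Proof. by move=> [[_ [qc _]] _]; apply/continuous_subspace_setT. Qed.

Lemma restr_unbased (q : M) (S : set cone) :
  based_cone_map q -> unbased_maps_into x0 y0 S (restr (fun=> y0) S q).
Proof.
move=> qb; have [[qbased _] _] := qb; split; [|split].
- by move=> t St; rewrite /restr asboolT //; exact: qbased.
- apply: (@subspace_eq_continuous _ _ _ (q : cone -> {compact-open, X -> Y})).
    by move=> t /set_mem St; rewrite /from_subspace /restr asboolT.
  exact/continuous_subspaceT/continuous_based_cone_map.
- by move=> t St; rewrite /restr asboolF.
Qed.

Lemma cwedgeE (A : {set {set E}}) :
  cwedge e0 A = [set apex] `|` \big[setU/set0]_(F <- enum A) cface F.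
Proof.
rewrite -bigcup_seq; apply/seteqP.
split=> c [->|[F FA Fc]]; [by left|right|by left|right].
  by exists F; rewrite //= mem_enum.
by exists F; rewrite // -mem_enum.
Qed.

Variables (A : {set {set E}}) (qs : {set E} -> M).
Hypothesis layoutA : layout A.
Hypothesis a_based : based_maps x0 y0 a.
Hypothesis qs_based : forall F, F \in A -> based_cone_map (qs F).

Local Notation wedge := (wedge_map e0 y0 a A (face_restr A qs)).

Lemma wedge_map_face F c : F \in A -> cface F c -> wedge c = qs F c.
Proof.
move=> FA Fc; rewrite /wedge_map.
case: eqP => [->|ne]; first by have [_ ->] := qs_based FA.
case: pickP => [G /andP[GA /asboolP Gc]|/(_ F)]; last by rewrite FA /= asboolT.
have [->|GF] := eqVneq G F; first by rewrite /face_restr FA /restr asboolT.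
by case: ne; apply: cface_disjoint Gc Fc; apply/eqP; exact: layoutA.2.
Qed.

Lemma wedge_map_out c : ~ cwedge e0 A c -> wedge c = fun=> y0.
Proof.
move=> nc; rewrite /wedge_map; case: eqP => [ca|_]; first by case: nc; left.
by case: pickP => // F /andP[FA /asboolP Fc]; case: nc; right; exists F.
Qed.

Lemma wedge_map_unbased : unbased_maps_into x0 y0 (cwedge e0 A) wedge.
Proof.
split; [|split]; last by move=> c /wedge_map_out ->.
- move=> c _; rewrite /wedge_map; case: eqP => _ //.
  case: pickP => [F /andP[FA /asboolP Fc]|_]; last exact: based_maps_cst.
  by rewrite /face_restr FA /restr asboolT //; have [[qb _] _] := qs_based FA; exact: qb.
rewrite cwedgeE; apply: withinU_continuous.
- exact: closed_apex.
- by apply: closed_bigsetU => F _; exact: closed_cface.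
- exact: continuous_subspace1.
apply: within_bigsetU_continuous => [F _|F]; first exact: closed_cface.
rewrite mem_enum => FA.
apply: (@subspace_eq_continuous _ _ _ (qs F : cone -> {compact-open, X -> Y})).
  by move=> c /set_mem Fc; rewrite /from_subspace (wedge_map_face FA Fc).
exact/continuous_subspaceT/continuous_based_cone_map/qs_based.
Qed.

End Wedge.

Section AlmostFissile.
Variables (R : realType) (E : finType) (e0 : E) (X Y : topologicalType).
Variables (x0 : X) (y0 : Y) (a : X -> Y).
Variables (K : finType) (k0 : K) (c : K -> int) (q : K -> cone R E -> X -> Y).
Variable A : {set {set E}}.
Local Notation M := (cone R E -> X -> Y).
Local Notation Q := (lincomb c q).

Definition combined_map (f : {ffun {set E} -> K}) : M :=
  wedge_map e0 y0 a A (face_restr y0 A (fun F => q (f F))).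

Lemma combine_lincomb :
  combine e0 y0 a A (fun F => restrict_ens y0 (cface F) Q) =
  lincomb (prod_coef k0 A c) combined_map.
Proof.
apply/funext => v; rewrite /combine /restrict_ens.
under eq_fsbigr => w /set_mem[wjk _] do
  rewrite (eq_bigr _ (fun F _ => congr1 (fun V => V (w F)) (lin_ext_lincomb _ _ _)))
          (prod_lincomb k0 _ _ wjk).
rewrite fsbig_lincomb; apply: eq_bigl => f.
apply/idP/eqP => [/set_mem[_ <-] //|fv]; apply/mem_set; split=> // F /negbTE FA.
by rewrite FA.
Qed.

Definition defect_coef (k : {ffun {set E} -> K} + K) : int :=
  match k with inl f => prod_coef k0 A c f | inr k => - c k end.

Definition defect_map (k : {ffun {set E} -> K} + K) : M :=
  match k with
  | inl f => combined_map f
  | inr k => restr (fun=> y0) (cwedge e0 A) (q k)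
  end.

Lemma fissile_defect_lincomb :
  (fun v => combine e0 y0 a A (fun F => restrict_ens y0 (cface F) Q) v
            - restrict_ens y0 (cwedge e0 A) Q v) = lincomb defect_coef defect_map.
Proof. by rewrite combine_lincomb /restrict_ens lin_ext_lincomb; exact: lincombB. Qed.

Hypothesis c1 : \sum_k c k = 1.
Hypothesis layoutA : layout A.
Hypothesis q_based : forall k, based_maps_into x0 y0 [set: cone R E] (apex R e0) a (q k).

Lemma lincomb_combined_map_eval (cc : cone R E) : cwedge e0 A cc ->
  lincomb (prod_coef k0 A c) (fun f => combined_map f cc) = lincomb c (fun k => q k cc).
Proof.
case=> [->|[F FA Fc]].
  have -> : (fun k => q k (apex R e0)) = fun=> a.
    by apply/funext => k; have [_ ->] := q_based k.
  have -> : (fun f => combined_map f (apex R e0)) = fun=> a.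
    by apply/funext => f; rewrite /combined_map /wedge_map eqxx.
  by rewrite !lincomb_cst sum_prod_coef // c1.
rewrite -(lincomb_prod_coef_eval k0 c1 _ FA); congr lincomb; apply/funext => f.
by rewrite /combined_map (wedge_map_face layoutA (fun G _ => q_based (f G)) FA Fc).
Qed.

Lemma lincomb_defect_map_eval (cc : cone R E) : cwedge e0 A cc ->
  lincomb defect_coef (fun k => defect_map k cc) = fun=> 0.
Proof.
move=> Acc; apply/funext => t; rewrite /lincomb big_sumType sumrN /=.
have := congr1 (fun V => V t) (lincomb_combined_map_eval Acc); rewrite /lincomb => ->.
by rewrite /restr (asboolT Acc) subrr.
Qed.

End AlmostFissile.

Theorem lemma13p2 (R : realType) (X Y : topologicalType) (x0 : X) (y0 : Y)
    (a : X -> Y) (E : finType) (e0 : E)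
    (Q : (cone R E -> X -> Y) -> int) :
  compact [set: X] -> hausdorff_space X ->
  based_maps x0 y0 a ->
  free_ab (based_maps_into x0 y0 [set: cone R E] (@apex R E e0) a) Q ->
  augmentation Q = 1 ->
  @almost_fissile R E e0 X Y x0 y0 a 1 Q.
Proof.
move=> cX hX a_based /free_ab_lincomb_repr[K [c [q [q_based ->]]]] augQ A layoutA /=.
have c1 : \sum_k c k = 1 by rewrite -augQ augmentation_lincomb.
have [k0 _] : exists k0 : K, true.
  case: (pickP (fun _ : K => true)) => [k _|K0]; first by exists k.
  by move: c1; rewrite big_pred0.
rewrite (fissile_defect_lincomb e0 y0 a k0).
have defect_unbased k : unbased_maps_into x0 y0 (cwedge e0 A) (defect_map e0 y0 a q A k).
  case: k => [f|k] /=; last exact: restr_unbased.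
  by apply: wedge_map_unbased => // F _; exact: q_based.
split; first exact: free_ab_lincomb.
rewrite lin_ext_lincomb; refine (filtration2_lincomb _ _) => [k|z].
  exact: hashX_based.
exact (lincomb_comp_eq0 (fun w => w (repr z).2)
  (lincomb_defect_map_eval k0 c1 layoutA q_based (set_valP (repr z).1))).
Qed.
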